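(* Let $(X,f)$ be a dynamical system. Then $(X,f)$ is multi-minimal if and only if $(X,f^r)$ is multi-minimal for every $r\in\mathbb{N}$.
   Context: A dynamical system is a pair $(X,f)$ with $X$ a compact metric space and $f:X\to X$ continuous. A system is minimal if it has no proper non-empty closed invariant subset. $(X,f)$ is multi-minimal if for every $n\in\mathbb{N}$ the system $(X^n,f\times f^2\times\dots\times f^n)$ is minimal. *)

From Stdlib Require Import Reals List.
Open Scope R_scope.

Record MetricSpace := {
  mcarrier :> Type;
  mdist : mcarrier -> mcarrier -> R;
  mdist_nonneg : forall x y, 0 <= mdist x y;
  mdist_eq0 : forall x y, mdist x y = 0 <-> x = y;
  mdist_sym : forall x y, mdist x y = mdist y x;
  mdist_tri : forall x y z, mdist x z <= mdist x y + mdist y z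
}.

Arguments mdist {m}.

Definition is_open {X : MetricSpace} (U : X -> Prop) : Prop :=
  forall x, U x -> exists eps, 0 < eps /\ forall y, mdist x y < eps -> U y.

Definition compact (X : MetricSpace) : Prop :=
  forall (I : Type) (U : I -> X -> Prop),
    (forall i, is_open (U i)) ->
    (forall x, exists i, U i x) ->
    exists l : list I, forall x, exists i, In i l /\ U i x.

Definition continuous {X : MetricSpace} (f : X -> X) : Prop :=
  forall x eps, 0 < eps -> exists delta, 0 < delta /\
    forall y, mdist x y < delta -> mdist (f x) (f y) < eps.

Definition dynamical_system (X : MetricSpace) (f : X -> X) : Prop :=
  compact X /\ continuous f.

Definition iterate {X : Type} (r : nat) (f : X -> X) : X -> X := Nat.iter r f.

(* The n-fold product X^n, coordinates indexed by i = 0, ..., n-1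
   (coordinate i corresponds to the paper's coordinate i+1). *)
Definition power (n : nat) (X : Type) : Type := {i : nat | (i < n)%nat} -> X.

Definition multi_map {X : Type} (n : nat) (f : X -> X) : power n X -> power n X :=
  fun x i => iterate (S (proj1_sig i)) f (x i).

(* Closed subsets of X^n for the product topology (equivalently, the max metric). *)
Definition closed_power {X : MetricSpace} (n : nat) (A : power n X -> Prop) : Prop :=
  forall x, ~ A x -> exists eps, 0 < eps /\
    forall y : power n X, (forall i, mdist (x i) (y i) < eps) -> ~ A y.

Definition minimal_power {X : MetricSpace} (n : nat) (F : power n X -> power n X) : Prop :=
  forall A : power n X -> Prop,
    closed_power n A ->
    (exists x, A x) ->
    (forall x, A x -> A (F x)) ->
    forall x, A x.

Definition multi_minimal (X : MetricSpace) (f : X -> X) : Prop :=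
  forall n : nat, (1 <= n)%nat -> minimal_power n (multi_map n f).

From Stdlib Require Import Reals List.
From Stdlib Require Import Arith Lia FunctionalExtensionality.
Local Open Scope nat_scope.

(* The backward direction is the case r = 1.  For the forward direction fix
   r, n >= 1.  The map  x |-> (x_r, x_2r, ..., x_nr)  from X^(nr) to X^n
   (keeping every r-th coordinate) intertwines f x f^2 x ... x f^(nr) with
   f^r x f^2r x ... x f^nr, because coordinate kr of the former is moved by
   f^(kr) = (f^r)^k.  It is onto, and preimages of closed sets are closed.
   Hence it is a factor map, and a factor of a minimal system is minimal. *)

Lemma iterate_add {T : Type} (f : T -> T) (a b : nat) (z : T) :
  iterate (a + b) f z = iterate a f (iterate b f z).
Proof. unfold iterate; induction a as [|a IH]; simpl; congruence. Qed.

Lemma iterate_mul {T : Type} (f : T -> T) (r k : nat) (z : T) :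
  iterate k (iterate r f) z = iterate (k * r) f z.
Proof.
  induction k as [|k IH]; [reflexivity|].
  change (iterate (S k) (iterate r f) z)
    with (iterate r f (iterate k (iterate r f) z)).
  now rewrite IH, <- iterate_add.
Qed.

Lemma multi_map_iterate_one {T : Type} (n : nat) (f : T -> T) :
  multi_map n (iterate 1 f) = multi_map n f.
Proof.
  apply functional_extensionality; intros x.
  apply functional_extensionality; intros i.
  unfold multi_map; now rewrite iterate_mul, Nat.mul_1_r.
Qed.

Notation index n := {i : nat | i < n}.

(* Equality of indices only depends on their values (proof irrelevance of <). *)
Lemma index_eq (n a b : nat) (pa : a < n) (pb : b < n) :
  a = b -> exist (fun i => i < n) a pa = exist (fun i => i < n) b pb.
Proof. intros ->; f_equal; apply Peano_dec.le_unique. Qed.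

Definition select {X : Type} {m n : nat} (sigma : index n -> index m)
  (x : power m X) : power n X :=
  fun i => x (sigma i).

Lemma closed_power_select {X : MetricSpace} (m n : nat)
  (sigma : index n -> index m) (A : power n X -> Prop) :
  closed_power n A -> closed_power m (fun x => A (select sigma x)).
Proof.
  intros HA x Hx.
  destruct (HA _ Hx) as [eps [Heps Hball]].
  exists eps; split; [exact Heps|].
  intros y Hy; apply Hball; intros i; apply Hy.
Qed.

Lemma minimal_power_select_factor {X : MetricSpace} (m n : nat)
  (sigma : index n -> index m) (F : power m X -> power m X)
  (G : power n X -> power n X) :
  minimal_power m F ->
  (forall y : power n X, exists x, select sigma x = y) ->
  (forall x, select sigma (F x) = G (select sigma x)) ->
  minimal_power n G.
Proof.
  intros HF Hsurj Hcomm A Hclosed [y0 Hy0] Hinv y.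
  assert (Hpre : forall x, A (select sigma x)).
  { apply HF.
    - now apply closed_power_select.
    - destruct (Hsurj y0) as [x0 <-]; now exists x0.
    - intros x Hx; rewrite Hcomm; now apply Hinv. }
  destruct (Hsurj y) as [x <-]; apply Hpre.
Qed.

Section EveryRthCoordinate.

Variables n r : nat.
Hypothesis r_pos : 1 <= r.

(* Coordinate i of X^n (paper's i+1) is coordinate r(i+1)-1 of X^(nr)
   (paper's r(i+1)). *)
Definition rth_index (i : index n) : index (n * r) :=
  exist _ (r * S (proj1_sig i) - 1)
    (ltac:(destruct i as [i Hi]; simpl; nia) : r * S (proj1_sig i) - 1 < n * r).

Definition block_index (j : index (n * r)) : index n :=
  exist _ (proj1_sig j / r)
    (ltac:(destruct j as [j Hj]; simpl;
           apply Nat.Div0.div_lt_upper_bound; nia) : proj1_sig j / r < n).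

Lemma block_index_rth_index (i : index n) : block_index (rth_index i) = i.
Proof.
  destruct i as [i Hi]; unfold block_index, rth_index; simpl.
  apply index_eq; symmetry; apply (Nat.div_unique _ _ _ (r - 1)); nia.
Qed.

(* Keeping every r-th coordinate is onto: extend y blockwise constantly. *)
Lemma select_rth_surjective {X : Type} (y : power n X) :
  exists x : power (n * r) X, select rth_index x = y.
Proof.
  exists (fun j => y (block_index j)).
  apply functional_extensionality; intros i.
  unfold select; now rewrite block_index_rth_index.
Qed.

(* Coordinate r(i+1) is moved by f^(r(i+1)) = (f^r)^(i+1). *)
Lemma select_rth_intertwines {X : Type} (f : X -> X) (x : power (n * r) X) :
  select rth_index (multi_map (n * r) f x)
  = multi_map n (iterate r f) (select rth_index x).
Proof.
  apply functional_extensionality; intros [i Hi].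
  unfold select, multi_map, rth_index; cbn [proj1_sig].
  rewrite iterate_mul.
  now replace (S (r * S i - 1)) with (S i * r) by nia.
Qed.

End EveryRthCoordinate.

Theorem proposition6p2 (X : MetricSpace) (f : X -> X) :
  dynamical_system X f ->
  (multi_minimal X f <->
   forall r : nat, (1 <= r)%nat -> multi_minimal X (iterate r f)).
Proof.
  intros _; split.
  - intros Hmin r Hr n Hn.
    apply (minimal_power_select_factor (n * r) n (rth_index n r Hr)
             (multi_map (n * r) f)).
    + apply Hmin; nia.
    + apply select_rth_surjective.
    + apply select_rth_intertwines.
  - intros Hall n Hn.
    rewrite <- multi_map_iterate_one.
    now apply Hall.
Qed.
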